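(* Let pieces have length $a=2$ and let $m\geq 1$. There is a bijective correspondence between positive $(2m,m)$-strings and right $0$-pyramids of size $m$.
   Context: A string is a finite sequence of $0$'s and $1$'s; an $(n,m)$-string is a string of length $n$ containing exactly $m$ $1$'s. A $(2m,m)$-string $x_1x_2\dots x_{2m}$ is positive if $t_s=\sum_{u=1}^s(2x_u-1)\geq 0$ for all $s=1,\dots,2m$. A piece is an open interval $]s,s+2[$ with $s\in\mathbb Z$; two pieces are concurrent iff their intervals intersect. A heap is a finite configuration obtained by successively dropping pieces vertically towards the horizontal axis, each coming to rest on the axis or on the highest previously placed piece whose interval meets its own (configurations, not dropping orders, are counted). A pyramid is a heap with a unique bottom piece (exactly one piece on the axis); its size is its number of pieces. A right $0$-pyramid is a pyramid whose bottom piece covers $]0,2[$ and is a leftmost piece (no piece covers $]t,t+2[$ with $t<0$). *)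

From HB Require Import structures.
From mathcomp Require Import all_boot all_algebra.
From mathcomp Require Import finmap.
Set Implicit Arguments. Unset Strict Implicit. Unset Printing Implicit Defensive.
Import GRing.Theory Num.Theory.
Local Open Scope fset_scope.

Definition nm_string (n m : nat) (x : seq bool) : bool :=
  (size x == n) && (count id x == m).

Definition tsum (x : seq bool) (s : nat) : int :=
  (\sum_(u <- take s x) ((2 * nat_of_bool u)%:Z - 1))%R.

Definition positive_string (m : nat) (x : seq bool) : Prop :=
  nm_string (2 * m) m x /\ forall s : nat, 1 <= s <= 2 * m -> (0 <= tsum x s)%R.

Definition PosString (m : nat) := {x : seq bool | positive_string m x}.

(** Pieces and heaps.  A piece ]s,s+2[ placed at height h (0 = on the axis)
    is represented by the pair (s, h). *)
Definition concurrent (s t : int) : bool := (`|s - t| < 2)%R.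

Definition drop_height (C : seq (int * nat)) (s : int) : nat :=
  foldr (fun p acc => if concurrent p.1 s then maxn acc p.2.+1 else acc) 0 C.

Definition drop (C : seq (int * nat)) (s : int) : seq (int * nat) :=
  (s, drop_height C s) :: C.

Definition drop_all (ds : seq int) : seq (int * nat) := foldl drop [::] ds.

Definition is_heap (H : {fset (int * nat)}) : Prop :=
  exists ds : seq int, [fset p | p in drop_all ds] = H.

Definition bottom_pieces (H : {fset (int * nat)}) : {fset (int * nat)} :=
  [fset p in H | p.2 == 0%N].

Definition is_pyramid (H : {fset (int * nat)}) : Prop :=
  is_heap H /\ #|` bottom_pieces H| = 1%N.

Definition size_heap (H : {fset (int * nat)}) : nat := #|` H|.

(* right 0-pyramid: bottom piece covers ]0,2[ and it is a leftmost piece *)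
Definition is_right0pyramid (H : {fset (int * nat)}) : Prop :=
  is_pyramid H /\ bottom_pieces H = [fset (0%Z, 0%N)]
  /\ (forall p, p \in H -> (0 <= p.1)%R).

Definition RightPyramid (m : nat) :=
  {H : {fset (int * nat)} | is_right0pyramid H /\ size_heap H = m}.

From Pilot Require Import Defs.
From HB Require Import structures.
From mathcomp Require Import all_boot all_algebra.
From mathcomp Require Import finmap zify.
From Stdlib Require Import ProofIrrelevance ClassicalEpsilon.
Import GRing.Theory Num.Theory.
Set Implicit Arguments. Unset Strict Implicit. Unset Printing Implicit Defensive.

(* A positive string is a Dyck path.  Record, for each 1, the height t_s at
   which that up-step starts: this gives a sequence of levels w starting at 0
   with w_(i+1) <= w_i + 1, and the levels determine the path.  Drop pieces at
   positions w_1, w_2, ... in turn.  A piece dropped at w_(i+1) <= w_i + 1 is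
   concurrent with an earlier piece at w_(i+1) - 1 or at 0, so only the first
   piece rests on the axis and we get a right 0-pyramid of size m.  The piece
   dropped last is the leftmost of the pieces with nothing above them, so the
   levels can be read back from the pyramid by repeatedly removing that piece;
   removing it from any right 0-pyramid leaves a right 0-pyramid, which gives
   surjectivity. *)

Fixpoint dyck (L : nat) (x : seq bool) : bool :=
  match x with
  | [::] => L == 0
  | b :: x' => if b then dyck L.+1 x' else (0 < L) && dyck L.-1 x'
  end.

Lemma tsum0 x : tsum x 0 = 0%R.
Proof. by rewrite /tsum take0 big_nil. Qed.

Lemma tsum_cons b x s : tsum (b :: x) s.+1 = ((if b then 1 else -1) + tsum x s)%R.
Proof. by rewrite /tsum /= big_cons; case: b. Qed.

Lemma tsum_oversize x s : size x <= s -> tsum x s = tsum x (size x).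
Proof. by move=> h; rewrite /tsum take_size take_oversize. Qed.

Lemma tsum_size x : tsum x (size x) = ((2 * count id x)%:Z - (size x)%:Z)%R.
Proof.
elim: x => [|b x IH]; first by rewrite tsum0.
by rewrite /= tsum_cons IH; case: b => /=; lia.
Qed.

Lemma dyck_tsum L x : dyck L x ->
  (forall s, (0 <= L%:Z + tsum x s)%R) /\ (L%:Z + tsum x (size x) = 0)%R.
Proof.
elim: x L => [|b x IH] L /=.
  move=> /eqP ->; split; last by rewrite tsum0.
  by move=> s; rewrite /tsum take_oversize // big_nil.
have step L' : dyck L' x -> (if b then L' = L.+1 else L' = L.-1 /\ 0 < L) ->
    (forall s, (0 <= L%:Z + tsum (b :: x) s)%R) /\
    (L%:Z + tsum (b :: x) (size (b :: x)) = 0)%R.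
  move=> /IH [ge0 end0] hL'; split.
    case=> [|s]; first by rewrite tsum0; lia.
    by rewrite tsum_cons; move: (ge0 s); case: b hL' => /=; lia.
  by rewrite /= tsum_cons; move: end0; case: b hL' => /=; lia.
case: b step => step; first by move=> /step; apply.
by move=> /andP [L_gt0 /step]; apply.
Qed.

Lemma tsum_dyck L x :
  (forall s, s <= size x -> (0 <= L%:Z + tsum x s)%R) ->
  (L%:Z + tsum x (size x) = 0)%R -> dyck L x.
Proof.
elim: x L => [|b x IH] L /=.
  by rewrite tsum0 => _ h; apply/eqP; lia.
move=> ge0 end0.
have IHx L' : (L'%:Z = (if b then 1 else -1) + L%:Z)%R -> dyck L' x.
  move=> EL'; apply: IH => [s hs|].
    by move: (ge0 s.+1 hs); rewrite tsum_cons; lia.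
  by move: end0; rewrite tsum_cons; lia.
have := ge0 1 erefl; rewrite tsum_cons tsum0.
by case: b {ge0 end0} IHx => IHx ge1 /=; [apply: IHx | rewrite IHx; lia].
Qed.

Lemma positive_stringE m x : positive_string m x <-> dyck 0 x /\ size x = 2 * m.
Proof.
split.
  case=> /andP [/eqP size_x /eqP count_x] pos; split=> //.
  have total : tsum x (size x) = 0%R by rewrite tsum_size size_x count_x; lia.
  apply: tsum_dyck => [[|s] _|]; rewrite ?tsum0 ?total //.
  have [le_s|lt_s] := leqP s.+1 (2 * m); first by have := pos s.+1; lia.
  by rewrite tsum_oversize ?total; lia.
case=> hd size_x; have [ge0 end0] := dyck_tsum hd.
rewrite tsum_size size_x in end0.
split; first by rewrite /nm_string size_x eqxx /=; apply/eqP; lia.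
by move=> s _; move: (ge0 s); lia.
Qed.

(* [up_levels L x] lists the levels at which the up-steps of a path started
   at level [L] begin; [of_levels] inverts it. *)
Fixpoint up_levels (L : nat) (x : seq bool) : seq nat :=
  match x with
  | [::] => [::]
  | b :: x' => if b then L :: up_levels L.+1 x' else up_levels L.-1 x'
  end.

Fixpoint of_levels (L : nat) (w : seq nat) : seq bool :=
  match w with
  | [::] => nseq L false
  | a :: w' => nseq (L - a) false ++ true :: of_levels a.+1 w'
  end.

Definition climb (a b : nat) : bool := b <= a.+1.

(* The default [1] of [head] rules out the empty sequence. *)
Definition level_seq (w : seq nat) : bool := (head 1 w == 0) && sorted climb w.

Lemma up_levels_head L x a w : up_levels L x = a :: w -> a <= L.
Proof.
elim: x L => [|[] x IH] L //=; first by case=> -> _.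
by move=> /IH; lia.
Qed.

Lemma sorted_up_levels L x : sorted climb (up_levels L x).
Proof.
elim: x L => [|[] x IH] L //=.
case E: (up_levels L.+1 x) => [|a w] //=.
by have := IH L.+1; rewrite E /= => ->; rewrite andbT /climb (up_levels_head E).
Qed.

Lemma size_up_levels L x : size (up_levels L x) = count id x.
Proof. by elim: x L => [|[] x IH] L //=; rewrite IH. Qed.

Lemma up_levels_nseq L k y : up_levels L (nseq k false ++ y) = up_levels (L - k) y.
Proof.
elim: k L => [|k IH] L /=; first by rewrite subn0.
by rewrite IH; congr up_levels; lia.
Qed.

Lemma dyck_nseq L k y : dyck L (nseq k false ++ y) = (k <= L) && dyck (L - k) y.
Proof.
elim: k L => [|k IH] L /=; first by rewrite subn0.
by rewrite IH; case: L.
Qed.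

Lemma of_levelsS L w : (forall a w', w = a :: w' -> a <= L) ->
  of_levels L.+1 w = false :: of_levels L w.
Proof. by case: w => [|a w] //= /(_ a w erefl) a_le; rewrite subSn. Qed.

Lemma of_levelsK L x : dyck L x -> of_levels L (up_levels L x) = x.
Proof.
elim: x L => [|[] x IH] L /=; first by move=> /eqP ->.
  by move=> /IH ->; rewrite subnn.
case: L => [|L] //= /IH x_eq.
by rewrite of_levelsS ?x_eq // => a w; apply: up_levels_head.
Qed.

Lemma of_levels_spec L w : sorted climb w -> (forall a w', w = a :: w' -> a <= L) ->
  [/\ dyck L (of_levels L w), up_levels L (of_levels L w) = w
    & size (of_levels L w) = L + 2 * size w].
Proof.
elim: w L => [|a w IH] L /=.
  move=> _ _; split; [by elim: L | by elim: L | by rewrite size_nseq addn0].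
move=> sorted_aw a_le; have {}a_le := a_le a w erefl.
have a_sub : L - (L - a) = a by lia.
have [dyck_w levels_w size_w] : [/\ dyck a.+1 (of_levels a.+1 w),
    up_levels a.+1 (of_levels a.+1 w) = w & size (of_levels a.+1 w) = a.+1 + 2 * size w].
  apply: IH; first exact: path_sorted sorted_aw.
  by move=> b w' E; move: sorted_aw; rewrite E /= => /andP [].
split.
- by rewrite dyck_nseq a_sub /= dyck_w andbT; lia.
- by rewrite up_levels_nseq a_sub /= levels_w.
- by rewrite size_cat size_nseq /= size_w; lia.
Qed.

Lemma positive_level_seq m x : 1 <= m -> positive_string m x ->
  level_seq (up_levels 0 x) /\ size (up_levels 0 x) = m.
Proof.
move=> m_gt0 pos_x; case: (pos_x) => /andP [_ /eqP count_x] _.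
have size_w : size (up_levels 0 x) = m by rewrite size_up_levels count_x.
split=> //; rewrite /level_seq sorted_up_levels andbT.
case E: (up_levels 0 x) => [|a w]; first by move: size_w; rewrite E /=; lia.
by have := up_levels_head E; case: a {E}.
Qed.

Lemma level_seq_positive w : level_seq w ->
  positive_string (size w) (of_levels 0 w) /\ up_levels 0 (of_levels 0 w) = w.
Proof.
case/andP=> head_w sorted_w.
have head0 a w' : w = a :: w' -> a <= 0 by move=> E; move: head_w; rewrite E => /eqP /= ->.
have [dyck_w levels_w size_w] := of_levels_spec sorted_w head0.
by split=> //; apply/positive_stringE.
Qed.

Notation piece := (int * nat)%type.

Lemma concurrentC s t : concurrent s t = concurrent t s.
Proof. by rewrite /concurrent -normrN opprB. Qed.

Lemma concurrent_refl s : concurrent s s.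
Proof. by rewrite /concurrent subrr. Qed.

Lemma drop_height_cons (q : piece) C s : drop_height (q :: C) s =
  if concurrent q.1 s then maxn (drop_height C s) q.2.+1 else drop_height C s.
Proof. by []. Qed.

Lemma drop_height_gt C s (p : piece) :
  p \in C -> concurrent p.1 s -> p.2 < drop_height C s.
Proof.
elim: C => // q C IH; rewrite inE drop_height_cons => /orP [/eqP -> | p_in] p_s.
  by rewrite p_s; lia.
by have := IH p_in p_s; case: ifP => _; lia.
Qed.

Lemma drop_height_support C s : drop_height C s = 0 \/
  exists2 p : piece, p \in C & concurrent p.1 s /\ p.2.+1 = drop_height C s.
Proof.
elim: C => [|q C IH]; first by left.
rewrite drop_height_cons; case: ifP => q_s; last first.
  case: IH => [-> |[p p_in p_s]]; first by left.
  by right; exists p => //; rewrite inE p_in orbT.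
right; have [le_q|lt_q] := leqP (drop_height C s) q.2.+1.
  by exists q; [rewrite mem_head | split=> //; lia].
case: IH => [E |[p p_in [p_s p_top]]]; first lia.
by exists p; [rewrite inE p_in orbT | split=> //; lia].
Qed.

Lemma drop_heightE C s h :
  (forall p : piece, p \in C -> concurrent p.1 s -> p.2 < h) ->
  (h = 0 \/ exists2 p : piece, p \in C & concurrent p.1 s /\ p.2.+1 = h) ->
  drop_height C s = h.
Proof.
move=> below reach; apply/eqP; rewrite eqn_leq; apply/andP; split.
- by case: (drop_height_support C s) => [-> //|[p p_in [p_s <-]]]; apply: below.
- by case: reach => [-> //|[q q_in [q_s <-]]]; apply: drop_height_gt q_in q_s.
Qed.

Lemma drop_all_rcons ds s : drop_all (rcons ds s) = Defs.drop (drop_all ds) s.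
Proof. by rewrite /drop_all -cats1 foldl_cat. Qed.

Lemma drop_all_pos ds (p : piece) : p \in drop_all ds -> p.1 \in ds.
Proof.
elim/last_ind: ds => // ds s IH; rewrite drop_all_rcons mem_rcons !inE.
by case/orP=> [/eqP -> | /IH ->]; rewrite ?eqxx ?orbT.
Qed.

Lemma drop_all_at ds s : s \in ds -> exists h, (s, h) \in drop_all ds.
Proof.
elim/last_ind: ds => // ds t IH; rewrite mem_rcons drop_all_rcons inE.
case/orP=> [/eqP -> | /IH [h s_in]]; first by exists (drop_height (drop_all ds) t); rewrite mem_head.
by exists h; rewrite inE s_in orbT.
Qed.

Lemma uniq_drop_all ds : uniq (drop_all ds).
Proof.
elim/last_ind: ds => // ds s IH; rewrite drop_all_rcons /= IH andbT.
by apply/negP => /drop_height_gt /(_ (concurrent_refl s)); rewrite ltnn.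
Qed.

Lemma size_drop_all ds : size (drop_all ds) = size ds.
Proof. by elim/last_ind: ds => // ds s IH; rewrite drop_all_rcons size_rcons /= IH. Qed.

Definition layered (pT : predType piece) (C : pT) : Prop :=
  {in C &, forall p q, concurrent p.1 q.1 -> p.2 = q.2 -> p = q}.

Definition supported (pT : predType piece) (C : pT) : Prop :=
  {in C, forall p, 0 < p.2 ->
    exists2 q : piece, q \in C & concurrent q.1 p.1 /\ q.2.+1 = p.2}.

Lemma layered_drop_all ds : layered (drop_all ds).
Proof.
elim/last_ind: ds => [|ds s IH] p q; first by rewrite in_nil.
rewrite drop_all_rcons /= !inE.
case/orP=> [/eqP -> | p_in] /orP [/eqP -> | q_in] //= pq_conc pq_level.
- rewrite concurrentC in pq_conc.
  by have := drop_height_gt q_in pq_conc; rewrite pq_level ltnn.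
- by have := drop_height_gt p_in pq_conc; rewrite pq_level ltnn.
- exact: IH.
Qed.

Lemma supported_drop_all ds : supported (drop_all ds).
Proof.
elim/last_ind: ds => [|ds s IH] p; first by rewrite in_nil.
rewrite drop_all_rcons /= inE.
case/orP=> [/eqP -> /= | p_in p_gt0]; last first.
  by have [q q_in q_p] := IH p p_in p_gt0; exists q => //; rewrite inE q_in orbT.
case: (drop_height_support (drop_all ds) s) => [-> //|[q q_in q_s]] _.
by exists q => //; rewrite inE q_in orbT.
Qed.

Definition level_heap (w : seq nat) : seq piece := drop_all (map Posz w).

Definition top_in (pT : predType piece) (C : pT) (p : piece) : Prop :=
  {in C, forall q, concurrent q.1 p.1 -> q.2 <= p.2}.

Lemma level_heap_rcons w l : level_heap (rcons w l) =
  (Posz l, drop_height (level_heap w) (Posz l)) :: level_heap w.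
Proof. by rewrite /level_heap map_rcons drop_all_rcons. Qed.

Lemma level_heap_cat u v :
  level_heap (u ++ v) = foldl Defs.drop (level_heap u) (map Posz v).
Proof. by rewrite /level_heap map_cat /drop_all foldl_cat. Qed.

Lemma level_heap_pos w (p : piece) : p \in level_heap w -> exists2 y, y \in w & p.1 = y.
Proof. by move=> /drop_all_pos /mapP [y y_in ->]; exists y. Qed.

Lemma level_heap_split w (r : piece) : r \in level_heap w -> exists u y v,
  [/\ w = u ++ y :: v, r \in level_heap (rcons u y) & r.1 = Posz y].
Proof.
elim/last_ind: w => // w x IH; rewrite level_heap_rcons inE => /orP [/eqP -> | r_in].
  by exists w, x, [::]; rewrite cats1 level_heap_rcons mem_head.
have [u [y [v [-> r_uy r_y]]]] := IH r_in.
by exists u, y, (rcons v x); rewrite rcons_cat.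
Qed.

Lemma mem_foldl_drop ds C (r : piece) : r \in C -> r \in foldl Defs.drop C ds.
Proof. by elim: ds C => // s ds IH C r_in /=; apply: IH; rewrite inE r_in orbT. Qed.

Lemma foldl_drop_above ds C (r : piece) s : r \in C -> s \in ds -> concurrent r.1 s ->
  exists2 r' : piece, r' \in foldl Defs.drop C ds & r'.1 = s /\ r.2 < r'.2.
Proof.
elim: ds C => // t ds IH C r_in; rewrite inE => /orP [/eqP <- | s_in] r_s /=.
  exists (s, drop_height C s); last by split=> //; apply: drop_height_gt r_in r_s.
  by apply: mem_foldl_drop; rewrite mem_head.
by apply: IH => //; rewrite inE r_in orbT.
Qed.

Lemma mem_climb_path x s t : path climb x s -> x <= t <= last x s -> t \in x :: s.
Proof.
elim: s x => [|y s IH] x /=; first by move=> _ t_x; rewrite inE; apply/eqP; lia.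
move=> /andP [x_y y_s] t_in; rewrite inE; have [//|t_ne_x] := eqVneq t x.
by apply: IH => //; move: x_y; rewrite /climb; lia.
Qed.

Lemma level_heap_last_top w l :
  top_in (level_heap (rcons w l)) (Posz l, drop_height (level_heap w) (Posz l)).
Proof.
move=> r; rewrite level_heap_rcons inE => /orP [/eqP -> //| r_in] r_l.
exact: ltnW (drop_height_gt r_in r_l).
Qed.

Lemma level_heap_covered u y v l (r : piece) :
  path climb y (rcons v l) -> y.+2 <= l -> r \in level_heap (rcons u y) -> r.1 = Posz y ->
  exists2 r' : piece, r' \in level_heap (u ++ y :: v) & concurrent r'.1 r.1 /\ r.2 < r'.2.
Proof.
move=> climb_yl y_l r_in r_y.
have y1_in : y.+1 \in v.
  have := mem_climb_path (t := y.+1) climb_yl; rewrite last_rcons => /(_ ltac:(lia)).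
  by rewrite inE mem_rcons inE => /or3P [/eqP|/eqP|//]; lia.
have r_y1 : concurrent r.1 (Posz y.+1) by rewrite r_y /concurrent; lia.
rewrite -cat_rcons level_heap_cat.
have [r' r'_in [r'_y1 r_below]] := foldl_drop_above r_in (map_f Posz y1_in) r_y1.
by exists r' => //; rewrite r'_y1 r_y /concurrent; lia.
Qed.

Lemma level_heap_last_leftmost w l (r : piece) : sorted climb (rcons w l) ->
  r \in level_heap (rcons w l) -> r != (Posz l, drop_height (level_heap w) (Posz l)) ->
  top_in (level_heap (rcons w l)) r -> (Posz l < r.1)%R.
Proof.
move=> sorted_wl; rewrite level_heap_rcons inE => /predU1P [-> | r_in]; first by rewrite eqxx.
move=> _ r_top; have r_far : ~~ concurrent r.1 (Posz l).
  apply/negP => r_l; have := drop_height_gt r_in r_l.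
  by have := r_top _ (mem_head _ _); rewrite concurrentC => /(_ r_l) /=; lia.
have [u [y [v [w_eq r_in_uy r_y]]]] := level_heap_split r_in.
move: r_far; rewrite r_y /concurrent => r_far.
have [|y_le] := ltnP l y; first lia.
have climb_yl : path climb y (rcons v l).
  by move: sorted_wl; rewrite w_eq rcons_cat /= sorted_cat_cons => /andP [].
have [r' r'_in [r'_r r_below]] := level_heap_covered climb_yl ltac:(lia) r_in_uy r_y.
have := r_top r'; rewrite inE w_eq r'_in orbT => /(_ isT r'_r).
by rewrite leqNgt r_below.
Qed.
Local Open Scope fset_scope.

Lemma level_seq_rcons w x : w != [::] ->
  level_seq (rcons w x) = level_seq w && climb (last 0 w) x.
Proof. by case: w => // a w _; rewrite /level_seq /= rcons_path andbA. Qed.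

Lemma level_seq_single w : level_seq w -> size w = 1 -> w = [:: 0].
Proof. by case: w => [|a [|b w]] // /andP [/eqP /= ->]. Qed.

(* A piece dropped at [x <= last + 1] lands on a piece at [x - 1] or at [0]. *)
Lemma level_heap_drop_height_gt0 w x : level_seq w -> climb (last 0 w) x ->
  0 < drop_height (level_heap w) (Posz x).
Proof.
case: w => [//|a w] /andP [/eqP /= -> sorted_w] x_le.
have [z z_in z_x] : exists2 z, z \in 0 :: w & concurrent (Posz z) (Posz x).
  case: x x_le => [|x] x_le; first by exists 0; rewrite ?mem_head ?concurrent_refl.
  exists x; last by rewrite /concurrent; lia.
  by apply: mem_climb_path sorted_w _; apply/andP; split; rewrite //=; move: x_le; rewrite /climb.
have [h zh_in] := drop_all_at (map_f Posz z_in).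
exact: leq_ltn_trans (leq0n h) (drop_height_gt zh_in z_x).
Qed.

Lemma level_heap_bottom w : level_seq w ->
  (Posz 0, 0) \in level_heap w /\
  forall p : piece, p \in level_heap w -> p.2 = 0 -> p = (Posz 0, 0).
Proof.
elim/last_ind: w => [|w x IH] //; have [-> /andP [/eqP /= -> _]|w_ne] := eqVneq w [::].
  by split=> [|p]; rewrite ?mem_head // inE => /eqP ->.
rewrite level_seq_rcons // => /andP [level_w x_le].
have [bot_in bot_uniq] := IH level_w.
rewrite level_heap_rcons; split; first by rewrite inE bot_in orbT.
move=> p; rewrite inE => /predU1P [-> /= | ]; last exact: bot_uniq.
by have := level_heap_drop_height_gt0 level_w x_le; lia.
Qed.

Lemma level_heap_right0pyramid w : level_seq w ->
  is_right0pyramid [fset p | p in level_heap w] /\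
  size_heap [fset p | p in level_heap w] = size w.
Proof.
move=> level_w; have [bot_in bot_uniq] := level_heap_bottom level_w.
have bottom : bottom_pieces [fset p | p in level_heap w] = [fset (Posz 0, 0)].
  apply/fsetP => p; rewrite !inE; apply/andP/eqP => [[p_in /eqP /bot_uniq]|->]; first exact.
  by rewrite bot_in.
split; last by rewrite /size_heap card_fseq undup_id ?uniq_drop_all // size_drop_all size_map.
split; first by split; [exists (map Posz w) | rewrite bottom cardfs1].
split=> // p; rewrite inE => /level_heap_pos [y _ ->]; lia.
Qed.

Lemma eq_top_in (pT1 pT2 : predType piece) (C1 : pT1) (C2 : pT2) p : C1 =i C2 -> top_in C1 p -> top_in C2 p.
Proof. by move=> C12 p_top q; rewrite -C12; apply: p_top. Qed.

(* The last piece is recovered from the heap as its leftmost piece with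
   nothing above it. *)
Lemma level_heap_rcons_inj w1 w2 l1 l2 :
  sorted climb (rcons w1 l1) -> sorted climb (rcons w2 l2) ->
  level_heap (rcons w1 l1) =i level_heap (rcons w2 l2) ->
  l1 = l2 /\ level_heap w1 =i level_heap w2.
Proof.
move=> sorted1 sorted2 heap12; have heap21 := fun p => esym (heap12 p).
have uniq1 : uniq (level_heap (rcons w1 l1)) := uniq_drop_all _.
have uniq2 : uniq (level_heap (rcons w2 l2)) := uniq_drop_all _.
rewrite !level_heap_rcons in heap12 heap21 uniq1 uniq2.
set t1 := (Posz l1, _) in heap12 heap21 uniq1; set t2 := (Posz l2, _) in heap12 heap21 uniq2.
move: uniq1 uniq2 => /andP [t1_notin _] /andP [t2_notin _].
have t12 : t1 = t2.
  apply/eqP; apply: contraT => t12.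
  have lt12 : (Posz l1 < t2.1)%R.
    apply: level_heap_last_leftmost sorted1 _ _ _; rewrite ?level_heap_rcons.
    - by rewrite heap12 mem_head.
    - by rewrite eq_sym.
    - by apply: eq_top_in heap21 _; rewrite -level_heap_rcons; apply: level_heap_last_top.
  have lt21 : (Posz l2 < t1.1)%R.
    apply: level_heap_last_leftmost sorted2 _ _ _; rewrite ?level_heap_rcons.
    - by rewrite heap21 mem_head.
    - by [].
    - by apply: eq_top_in heap12 _; rewrite -level_heap_rcons; apply: level_heap_last_top.
  by move: lt12 lt21 => /=; lia.
split; first by case: t12.
move=> p; have := heap12 p; rewrite !inE t12.
by have [-> | _] := eqVneq p t2; rewrite ?(negbTE t2_notin) -?t12 ?(negbTE t1_notin).
Qed.

Lemma level_heap_inj n w1 w2 : level_seq w1 -> level_seq w2 ->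
  size w1 = n.+1 -> size w2 = n.+1 -> level_heap w1 =i level_heap w2 -> w1 = w2.
Proof.
elim: n w1 w2 => [|n IH] w1 w2 level1 level2 size1 size2.
  by rewrite (level_seq_single level1 size1) (level_seq_single level2 size2).
case/lastP: w1 level1 size1 => // u1 l1 level1 size1.
case/lastP: w2 level2 size2 => // u2 l2 level2 size2 heap12.
have [l12 heap_u12] := level_heap_rcons_inj (andP level1).2 (andP level2).2 heap12.
move: size1 size2; rewrite !size_rcons => -[size1] [size2].
have nonempty u : size u = n.+1 -> u != [::] by case: u.
move: level1 level2; rewrite !level_seq_rcons ?nonempty // => /andP [level1 _] /andP [level2 _].
by rewrite l12 (IH u1 u2).
Qed.

Definition topb (C : seq piece) (p : piece) : bool :=
  all (fun q : piece => concurrent q.1 p.1 ==> (q.2 <= p.2)) C.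

Lemma topP C p : reflect (top_in C p) (topb C p).
Proof.
apply: (iffP allP) => p_top q q_in; first by move=> q_p; apply: (implyP (p_top q q_in)).
by apply/implyP; apply: p_top.
Qed.

Lemma exists_argmin (T : eqType) (f : T -> int) (s : seq T) x0 : x0 \in s ->
  exists2 x, x \in s & {in s, forall y, (f x <= f y)%R}.
Proof.
elim: s x0 => // a s IH x0 _; case: s IH => [|b s] IH.
  by exists a => [|y]; rewrite ?mem_head // inE => /eqP ->.
have [x x_in x_min] := IH b (mem_head _ _).
have [fa_le|fx_lt] := lerP (f a) (f x).
  by exists a => [|y]; rewrite ?mem_head // in_cons => /predU1P [-> // | /x_min]; lia.
exists x => [|y]; first by rewrite in_cons x_in orbT.
by rewrite in_cons => /predU1P [-> | /x_min]; lia.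
Qed.

(* A highest piece has nothing above it, so some piece has nothing above it;
   among those take the leftmost one. *)
Lemma exists_leftmost_top (C : seq piece) p0 : p0 \in C ->
  exists2 p, p \in C & top_in C p /\ {in C, forall q, top_in C q -> (p.1 <= q.1)%R}.
Proof.
move=> p0_in; have [p1 p1_in p1_max] := exists_argmin (fun p : piece => - (p.2 : int))%R p0_in.
have p1_top : p1 \in [seq p <- C | topb C p].
  by rewrite mem_filter p1_in andbT; apply/topP => q /p1_max; lia.
have [p p_in p_min] := exists_argmin (fun p : piece => p.1) p1_top.
move: p_in; rewrite mem_filter => /andP [/topP p_top p_in].
by exists p => //; split=> // q q_in /topP q_top; apply: p_min; rewrite mem_filter q_top.
Qed.

Lemma supported_level1 (pT : predType piece) (C : pT) q : supported C ->
  q \in C -> 0 < q.2 -> exists2 r : piece, r \in C & r.2 = 1.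
Proof.
move=> supp; move Ek: q.2 => k; elim: k q Ek => // -[|k] IH q Eq q_in _; first by exists q.
have [r r_in [_ Er]] := supp q q_in ltac:(lia).
by apply: (IH r) => //; lia.
Qed.

(* Some piece of level 1 rests on the bottom piece, which is therefore not a top. *)
Lemma top_above_axis (pT : predType piece) (C : pT) p q : supported C ->
  {in C, forall r : piece, r.2 = 0 -> r = (Posz 0, 0)} ->
  q \in C -> q != (Posz 0, 0) -> p \in C -> top_in C p -> 0 < p.2.
Proof.
move=> supp axis q_in q_ne p_in p_top; rewrite lt0n; apply/eqP => p_axis.
have q_gt0 : 0 < q.2 by rewrite lt0n; apply: contra q_ne => /eqP /(axis q q_in) ->.
have [r r_in r_1] := supported_level1 supp q_in q_gt0.
have [s s_in [s_r s_0]] := supp r r_in ltac:(lia).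
rewrite (axis s s_in) -?(axis p p_in p_axis) in s_r; last lia.
by have := p_top r r_in; rewrite concurrentC => /(_ s_r); lia.
Qed.

Section Peel.

Variables (H : {fset piece}) (p : piece).
Hypotheses (p_in : p \in H) (p_top : top_in H p).

Lemma layered_fsetD1 : layered H -> layered (H `\ p).
Proof. by move=> lay q r; rewrite !in_fsetD1 => /andP [_ q_in] /andP [_ r_in]; apply: lay. Qed.

Lemma supported_fsetD1 : supported H -> supported (H `\ p).
Proof.
move=> supp q; rewrite in_fsetD1 => /andP [q_ne q_in] q_gt0.
have [r r_in [r_q r_below]] := supp q q_in q_gt0.
exists r => //; rewrite in_fsetD1 r_in andbT; apply: contraTneq r_q => r_p.
rewrite r_p in r_below *.
by apply/negP; rewrite concurrentC => /(p_top q_in); lia.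
Qed.

Lemma bottom_pieces_fsetD1 : 0 < p.2 -> bottom_pieces (H `\ p) = bottom_pieces H.
Proof.
move=> p_gt0; apply/fsetP => q; rewrite !inE.
by have [-> | //] := eqVneq q p; rewrite p_in /=; lia.
Qed.

Lemma drop_height_fsetD1 C : C =i H `\ p -> layered H -> supported H -> 0 < p.2 ->
  drop_height C p.1 = p.2.
Proof.
move=> C_eq lay supp p_gt0; apply: drop_heightE => [q | ].
  rewrite C_eq in_fsetD1 => /andP [q_ne q_in] q_p; rewrite ltn_neqAle (p_top q_in q_p) andbT.
  by apply: contra q_ne => /eqP q_level; apply/eqP/(lay q p).
right; have [q q_in [q_p q_below]] := supp p p_in p_gt0.
exists q => //; rewrite C_eq in_fsetD1 q_in andbT; apply/eqP => q_eq.
by rewrite q_eq in q_below; lia.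
Qed.

End Peel.

(* The last piece of [w] is either concurrent with [p] or has nothing above it
   in [H], and then lies right of [p]. *)
Lemma climb_leftmost_top w (H : {fset piece}) p : level_seq w ->
  level_heap w =i H `\ p -> top_in H p -> {in H, forall q, top_in H q -> (p.1 <= q.1)%R} ->
  (0 <= p.1)%R -> climb (last 0 w) (absz p.1).
Proof.
move=> level_w heap_w p_top p_left p_pos; rewrite /climb.
case/lastP: w level_w heap_w => [//|u l'] _ heap_w; rewrite last_rcons.
set t : piece := (Posz l', drop_height (level_heap u) (Posz l')).
have t_in : t \in H `\ p by rewrite -heap_w level_heap_rcons mem_head.
have [t_p|t_far] := boolP (concurrent t.1 p.1); first by move: t_p; rewrite /concurrent /=; lia.
have t_top : top_in H t.
  move=> r r_in r_t; have [r_eq|r_ne] := eqVneq r p.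
    by move: r_t; rewrite r_eq concurrentC (negbTE t_far).
  have r_in_u : r \in level_heap (rcons u l') by rewrite heap_w in_fsetD1 r_ne.
  exact: (level_heap_last_top r_in_u r_t).
move: t_in; rewrite in_fsetD1 => /andP [_ /p_left /(_ t_top)] /=.
by case: (p.1) p_pos => // k _; rewrite lez_nat /= => k_le; apply: leqW.
Qed.

Lemma bottom_axis (H : {fset piece}) : bottom_pieces H = [fset (Posz 0, 0)] ->
  (Posz 0, 0) \in H /\ {in H, forall r : piece, r.2 = 0 -> r = (Posz 0, 0)}.
Proof.
move=> bottom; have : (Posz 0, 0) \in bottom_pieces H by rewrite bottom inE.
rewrite !inE => /andP [bot_in _]; split=> // r r_in r_0.
have : r \in bottom_pieces H by rewrite !inE r_in r_0 eqxx.
by rewrite bottom inE => /eqP.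
Qed.

(* Peel off the leftmost piece with nothing above it, and drop it back last. *)
Lemma right0pyramid_level_seq n (H : {fset piece}) : #|` H| = n.+1 ->
  layered H -> supported H -> {in H, forall p : piece, (0 <= p.1)%R} ->
  bottom_pieces H = [fset (Posz 0, 0)] ->
  exists w, [/\ level_seq w, size w = n.+1 & level_heap w =i H].
Proof.
elim: n H => [|n IH] H card_H lay supp pos /[dup] bottom /bottom_axis [bot_in bot_axis].
  exists [:: 0]; split=> // r; move/eqP/cardfs1P: card_H => [x H_eq].
  by move: bot_in; rewrite H_eq !inE => /eqP ->.
have [q] : exists q, q \in H `\ (Posz 0, 0).
  by apply/fset0Pn; rewrite -cardfs_gt0; have := cardfsD1 (Posz 0, 0) H; rewrite bot_in; lia.
rewrite in_fsetD1 => /andP [q_ne q_in].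
have [p p_in [p_top p_left]] := exists_leftmost_top bot_in.
have p_gt0 := top_above_axis supp bot_axis q_in q_ne p_in p_top.
have card_Hp : #|` H `\ p| = n.+1 by have := cardfsD1 p H; rewrite p_in; lia.
have [w [level_w size_w heap_w]] :
    exists w, [/\ level_seq w, size w = n.+1 & level_heap w =i H `\ p].
  apply: IH card_Hp _ _ _ _.
  - exact: layered_fsetD1.
  - exact: supported_fsetD1.
  - by move=> r; rewrite in_fsetD1 => /andP [_ /pos].
  - by rewrite (bottom_pieces_fsetD1 p_in p_gt0).
exists (rcons w (absz p.1)); split.
- rewrite level_seq_rcons ?level_w; last by case: (w) size_w.
  exact: climb_leftmost_top level_w heap_w p_top p_left (pos p p_in).
- by rewrite size_rcons size_w.
have p_pos := pos p p_in; move=> r; rewrite level_heap_rcons inE heap_w in_fsetD1.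
rewrite gez0_abs // (drop_height_fsetD1 p_in p_top heap_w) // -surjective_pairing.
by have [-> | ] := eqVneq r p; rewrite ?p_in.
Qed.

Definition pyramid_of (x : seq bool) : {fset piece} :=
  [fset p | p in level_heap (up_levels 0 x)].

Lemma pyramid_of_right0pyramid m x : 1 <= m -> positive_string m x ->
  is_right0pyramid (pyramid_of x) /\ size_heap (pyramid_of x) = m.
Proof.
move=> m_gt0 pos_x; have [level_w size_w] := positive_level_seq m_gt0 pos_x.
by rewrite -size_w; apply: level_heap_right0pyramid.
Qed.

Lemma pyramid_of_inj m x1 x2 : 1 <= m -> positive_string m x1 -> positive_string m x2 ->
  pyramid_of x1 = pyramid_of x2 -> x1 = x2.
Proof.
move=> m_gt0 pos1 pos2 eq12.
have [[level1 size1] [level2 size2]] := (positive_level_seq m_gt0 pos1, positive_level_seq m_gt0 pos2).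
have [[dyck1 _] [dyck2 _]] := ((positive_stringE m x1).1 pos1, (positive_stringE m x2).1 pos2).
rewrite -(of_levelsK dyck1) -(of_levelsK dyck2); congr of_levels.
apply: (@level_heap_inj m.-1) => //; rewrite ?size1 ?size2 ?prednK //.
by move=> p; move/fsetP/(_ p): eq12; rewrite !inE.
Qed.

Lemma pyramid_of_surj m (H : {fset piece}) : 1 <= m -> is_right0pyramid H -> size_heap H = m ->
  exists2 x, positive_string m x & pyramid_of x = H.
Proof.
move=> m_gt0 [[[ds heap_H] _] [bottom pos]] size_H.
have lay : layered H by move=> p q; rewrite -heap_H !inE; apply: layered_drop_all.
have supp : supported H.
  move=> p; rewrite -heap_H inE => p_in p_gt0.
  by have [q q_in q_p] := supported_drop_all p_in p_gt0; exists q; rewrite ?inE.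
have card_H : #|` H| = m.-1.+1 by rewrite prednK.
have [w [level_w size_w heap_w]] := right0pyramid_level_seq card_H lay supp pos bottom.
have [pos_x levels_x] := level_seq_positive level_w.
exists (of_levels 0 w); first by rewrite size_w prednK in pos_x.
by apply/fsetP => p; rewrite /pyramid_of levels_x inE heap_w.
Qed.

Lemma proj1_sig_inj (A : Type) (P : A -> Prop) : injective (@proj1_sig A P).
Proof. exact: eq_sig_hprop (fun _ => proof_irrelevance _). Qed.

Lemma bijective_of_inj_surj (A B : Type) (f : A -> B) :
  injective f -> (forall y, exists x, f x = y) -> bijective f.
Proof.
move=> f_inj f_surj; pose g y := proj1_sig (constructive_indefinite_description _ (f_surj y)).
have gK : cancel g f by move=> y; rewrite /g; case: constructive_indefinite_description.
by exists g => // x; apply: f_inj; rewrite gK.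
Qed.

Theorem lemma2 (m : nat) (hm : 1 <= m) :
  exists f : PosString m -> RightPyramid m, bijective f.
Proof.
pose f (x : PosString m) : RightPyramid m :=
  exist _ (pyramid_of (proj1_sig x)) (pyramid_of_right0pyramid hm (proj2_sig x)).
exists f; apply: bijective_of_inj_surj.
- move=> [x1 pos1] [x2 pos2] /(congr1 (@proj1_sig _ _)) /= eq12.
  exact/proj1_sig_inj/(pyramid_of_inj hm pos1 pos2).
- move=> [H [pyr_H size_H]]; have [x pos_x H_eq] := pyramid_of_surj hm pyr_H size_H.
  by exists (exist _ x pos_x); apply: proj1_sig_inj.
Qed.
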